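(* For a fixed program $\mathcal{P}$ and set of processes $\Pi$, the set of last-use opaque histories produced by executions of $\mathcal{P}$ by $\Pi$ is (a) prefix-closed: every prefix of a last-use opaque history is last-use opaque, and (b) limit-closed: if $H_0,H_1,\dots$ is an infinite sequence of finite last-use opaque histories with each $H_h$ a prefix of $H_{h+1}$, then the infinite limit history is last-use opaque. Hence last-use opacity is a safety property.
   Context: Standard TM model: transactions $T_i$ with operations $\mathit{init}_i$, $\mathit{read}_i(x)$, $\mathit{write}_i(x,v)$, $\mathit{tryC}_i$, $\mathit{tryA}_i$, each an invocation/response pair; histories are well-formed sequences of such events with unique writes; variables have domain $\mathbb{N}_0$ and initial value $0$. Notions (committed, aborted, live, completion, equivalence, real-time order $\prec_H$, sequential history, legality via $\mathit{Seq}(x)$, $\mathrm{vis}(S,T_i)$) as usual. A program $\mathcal{P}$ assigns a subprogram to each process in $\Pi$; $\mathcal{H}(\mathcal{P},\Pi)$ is the set of all histories producible by executions of $\mathcal{P}$ by $\Pi$. An invocation of $\mathit{write}_i(x,v)$ in $H\in\mathcal{H}(\mathcal{P},\Pi)$ is the last write invocation on $x$ by $T_i$ if no $H'\in\mathcal{H}(\mathcal{P},\Pi)$ having $H$ as a prefix contains in $H'|T_i$ a later invocation of $\mathit{write}_i(x,u)$; a last write is a complete execution of such an invocation with response other than $A_i$; $T_i$ is decided on $x$ in $H$ if $H|T_i$ contains a complete write $w_i(x,v)\to ok_i$ that is a last write. $S\Downarrow_C T_j$ denotes $T_j$'s $\mathit{init}_j$ execution and all its operation executions on variables on which $T_j$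 is decided in $H$, followed by $\mathit{tryC}_j\to C_j$. For sequential $S$ equivalent to a completion of $H$, a last-use view of $T_i$ is a subhistory $V$ of $S$ that, for each $T_j$: contains $S|T_j$ if $j=i$ or ($T_j$ committed in $S$ and $T_j\prec_S T_i$); if $T_j$ is not committed in $S$, is decided on some variable in $H$, $T_j\prec_S T_i$ and not $T_j\prec_H T_i$, contains either $S\Downarrow_C T_j$ or nothing of $T_j$; otherwise contains nothing of $T_j$. $T_i$ is last-use legal in $S$ if some last-use view of $T_i$ is legal. A finite $H$ is final-state last-use opaque iff there is a sequential $S$ equivalent to some completion of $H$ that preserves the real-time order of $H$, in which every committed transaction is legal (i.e. $\mathrm{vis}(S,T_i)$ legal) and every non-committed transaction is last-use legal. $H$ is last-use opaque iff every finite prefix of $H$ is final-state last-use opaque. *)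

From Stdlib Require Import List Arith PeanoNat.
Import ListNotations.
Set Implicit Arguments.

(* Transactions, variables and values are natural numbers.
   Variables have domain N_0 with initial value 0. *)
Inductive op : Type :=
| OInit
| ORead (x : nat)
| OWrite (x v : nat)
| OTryC
| OTryA.

Inductive resp : Type :=
| ROk
| RVal (v : nat)
| RC
| RA.

Inductive event : Type :=
| Inv (i : nat) (o : op)
| Res (i : nat) (r : resp).

Definition txn (e : event) : nat :=
  match e with Inv i _ => i | Res i _ => i end.

Inductive hist : Type :=
| HFin (l : list event)
| HInf (f : nat -> event).

Definition hnth (H : hist) (n : nat) : option event :=
  match H with HFin l => nth_error l n | HInf f => Some (f n) end.

Definition hprefix (H1 H2 : hist) : Prop :=
  forall n e, hnth H1 n = Some e -> hnth H2 n = Some e.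

Definition proj (i : nat) (H : list event) : list event :=
  filter (fun e => Nat.eqb (txn e) i) H.

Definition txn_at (H : list event) (p i : nat) : Prop :=
  exists e, nth_error H p = Some e /\ txn e = i.

Definition in_hist (H : list event) (i : nat) : Prop := exists p, txn_at H p i.

Definition committed (H : list event) (i : nat) : Prop := In (Res i RC) H.
Definition aborted (H : list event) (i : nat) : Prop := In (Res i RA) H.

Definition is_final (r : resp) : bool :=
  match r with RC | RA => true | _ => false end.

Definition resp_ok (o : op) (r : resp) : bool :=
  match o, r with
  | _, RA => true
  | OInit, ROk => true
  | ORead _, RVal _ => true
  | OWrite _ _, ROk => true
  | OTryC, RC => true
  | _, _ => false
  end.

Fixpoint wf_ops (i : nat) (s : list event) : Prop :=
  match s with
  | [] => True
  | [Inv j o] => j = i /\ o <> OInit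
  | Inv j o :: Res k r :: s' =>
      j = i /\ k = i /\ o <> OInit /\ resp_ok o r = true /\
      (is_final r = true -> s' = []) /\ wf_ops i s'
  | _ => False
  end.

Definition wf_txn (i : nat) (s : list event) : Prop :=
  s = [] \/ s = [Inv i OInit] \/
  exists r s', s = Inv i OInit :: Res i r :: s' /\ resp_ok OInit r = true /\
               (is_final r = true -> s' = []) /\ wf_ops i s'.

Definition unique_writes (H : list event) : Prop :=
  (forall p q i j x v, nth_error H p = Some (Inv i (OWrite x v)) ->
     nth_error H q = Some (Inv j (OWrite x v)) -> p = q) /\
  (forall p i x v, nth_error H p = Some (Inv i (OWrite x v)) -> v <> 0).

Definition wf_list (H : list event) : Prop :=
  (forall i, wf_txn i (proj i H)) /\ unique_writes H.

Definition wf_hist (H : hist) : Prop :=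
  forall l, hprefix (HFin l) H -> wf_list l.

Definition compl_ext (i : nat) (s t : list event) : Prop :=
  ((s = [] \/ exists r, In (Res i r) s /\ is_final r = true) /\ t = [])
  \/
  (s <> [] /\ (forall r, In (Res i r) s -> is_final r = false) /\
   ((last s (Inv i OInit) = Inv i OTryC /\ (t = [Res i RC] \/ t = [Res i RA]))
    \/ (exists o, last s (Inv i OInit) = Inv i o /\ o <> OTryC /\ t = [Res i RA])
    \/ (exists r, last s (Inv i OInit) = Res i r /\ t = [Inv i OTryA; Res i RA]))).

Definition completion (H Hc : list event) : Prop :=
  exists ext, Hc = H ++ ext /\ forall i, compl_ext i (proj i H) (proj i ext).

Definition equivalent (H1 H2 : list event) : Prop :=
  forall i, proj i H1 = proj i H2.

Definition sequential (H : list event) : Prop :=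
  forall p q r i, p < q -> q < r -> txn_at H p i -> txn_at H r i -> txn_at H q i.

Definition rt (H : list event) (i j : nat) : Prop :=
  (committed H i \/ aborted H i) /\ in_hist H i /\ in_hist H j /\
  forall p q, txn_at H p i -> txn_at H q j -> p < q.

Definition preserves_rt (H Sq : list event) : Prop :=
  forall i j, rt H i j -> rt Sq i j.

Definition cwrite (Sq : list event) (q x u : nat) : Prop :=
  exists j, nth_error Sq q = Some (Inv j (OWrite x u)) /\
            nth_error Sq (S q) = Some (Res j ROk).

Definition legal (Sq : list event) : Prop :=
  forall p i x v,
    nth_error Sq p = Some (Inv i (ORead x)) ->
    nth_error Sq (S p) = Some (Res i (RVal v)) ->
    (exists q, q < p /\ cwrite Sq q x v /\
       forall q' u, q < q' -> q' < p -> ~ cwrite Sq q' x u)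
    \/ (v = 0 /\ forall q u, q < p -> ~ cwrite Sq q x u).

Definition sub_by (P : nat -> Prop) (H V : list event) : Prop :=
  exists f : nat -> bool, (forall j, f j = true <-> P j) /\
                          V = filter (fun e => f (txn e)) H.

Definition vis (Sq : list event) (i : nat) (V : list event) : Prop :=
  sub_by (fun j => j = i \/ (committed Sq j /\ rt Sq j i)) Sq V.

Definition tx_legal (Sq : list event) (i : nat) : Prop :=
  exists V, vis Sq i V /\ legal V.

(** * Last writes and decided transactions (relative to H(P,Pi) = HP) *)
Definition response_at (H : list event) (i p q : nat) (r : resp) : Prop :=
  p < q /\ nth_error H q = Some (Res i r) /\
  forall q', p < q' -> q' < q -> ~ txn_at H q' i.

Definition last_write_inv (HP : hist -> Prop) (H : list event) (i p x : nat) : Prop :=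
  forall H', HP H' -> hprefix (HFin H) H' ->
  forall q u, p < q -> hnth H' q <> Some (Inv i (OWrite x u)).

Definition decided (HP : hist -> Prop) (H : list event) (i x : nat) : Prop :=
  exists p v q, nth_error H p = Some (Inv i (OWrite x v)) /\
                response_at H i p q ROk /\ last_write_inv HP H i p x.

Fixpoint keep_dec (d : nat -> bool) (s : list event) : list event :=
  match s with
  | Inv j OInit :: (Res _ _ as r) :: s' => Inv j OInit :: r :: keep_dec d s'
  | Inv j (ORead x) :: (Res _ _ as r) :: s' =>
      if d x then Inv j (ORead x) :: r :: keep_dec d s' else keep_dec d s'
  | Inv j (OWrite x v) :: (Res _ _ as r) :: s' =>
      if d x then Inv j (OWrite x v) :: r :: keep_dec d s' else keep_dec d s'
  | _ :: s' => keep_dec d s'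
  | [] => []
  end.

Definition downC (HP : hist -> Prop) (H Sq : list event) (j : nat) (B : list event) : Prop :=
  exists d : nat -> bool, (forall x, d x = true <-> decided HP H j x) /\
    B = keep_dec d (proj j Sq) ++ [Inv j OTryC; Res j RC].

Definition lu_block (HP : hist -> Prop) (H Sq : list event) (i j : nat) (B : list event) : Prop :=
  ((j = i \/ (committed Sq j /\ rt Sq j i)) /\ B = proj j Sq)
  \/
  (~ (j = i \/ (committed Sq j /\ rt Sq j i)) /\
   (~ committed Sq j /\ (exists x, decided HP H j x) /\ rt Sq j i /\ ~ rt H j i) /\
   (downC HP H Sq j B \/ B = []))
  \/
  (~ (j = i \/ (committed Sq j /\ rt Sq j i)) /\
   ~ (~ committed Sq j /\ (exists x, decided HP H j x) /\ rt Sq j i /\ ~ rt H j i) /\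
   B = []).

Definition lu_view (HP : hist -> Prop) (H Sq : list event) (i : nat) (V : list event) : Prop :=
  exists (ord : list nat) (blk : nat -> list event),
    NoDup ord /\ Sq = concat (map (fun j => proj j Sq) ord) /\
    (forall j, In j ord -> lu_block HP H Sq i j (blk j)) /\
    V = concat (map blk ord).

Definition lu_legal (HP : hist -> Prop) (H Sq : list event) (i : nat) : Prop :=
  exists V, lu_view HP H Sq i V /\ legal V.

Definition fs_lu_opaque (HP : hist -> Prop) (H : list event) : Prop :=
  exists Sq Hc,
    completion H Hc /\ equivalent Hc Sq /\ sequential Sq /\ preserves_rt H Sq /\
    (forall i, committed Sq i -> tx_legal Sq i) /\
    (forall i, in_hist Sq i -> ~ committed Sq i -> lu_legal HP H Sq i).

Definition lu_opaque (HP : hist -> Prop) (H : hist) : Prop :=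
  forall l, hprefix (HFin l) H -> fs_lu_opaque HP l.

Definition is_limit (Hs : nat -> list event) (Hl : hist) : Prop :=
  (forall h, hprefix (HFin (Hs h)) Hl) /\
  (forall n e, hnth Hl n = Some e -> exists h, nth_error (Hs h) n = Some e).

(* Last-use opacity of a history is defined through its finite prefixes, so
   prefix-closure is transitivity of the prefix order.  For limit-closure,
   each of the finitely many events of a finite prefix of the limit already
   occurs in some member of the chain; the chain being increasing, one
   member contains them all, and that member is last-use opaque. *)
From Stdlib Require Import List Arith PeanoNat Lia.

Lemma hprefix_refl (H : hist) : hprefix H H.
Proof. unfold hprefix; auto. Qed.

Lemma hprefix_trans (H1 H2 H3 : hist) :
  hprefix H1 H2 -> hprefix H2 H3 -> hprefix H1 H3.
Proof. unfold hprefix; auto. Qed.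

Section IncreasingChain.

Variable Hs : nat -> list event.
Hypothesis Hs_incr : forall h, hprefix (HFin (Hs h)) (HFin (Hs (S h))).

Lemma chain_hprefix (h h' : nat) :
  h <= h' -> hprefix (HFin (Hs h)) (HFin (Hs h')).
Proof.
  induction 1 as [|h' _ IH].
  - apply hprefix_refl.
  - exact (hprefix_trans _ _ _ IH (Hs_incr h')).
Qed.

Lemma limit_finite_prefix (Hl : hist) (l : list event) :
  is_limit Hs Hl -> hprefix (HFin l) Hl ->
  exists h, hprefix (HFin l) (HFin (Hs h)).
Proof.
  intros [_ Hl_covered] l_Hl.
  assert (first_k : forall k, exists h, forall j e,
            j < k -> nth_error l j = Some e -> nth_error (Hs h) j = Some e).
  { induction k as [|k [h IH]].
    - exists 0; intros; lia.
    - destruct (nth_error l k) as [e|] eqn:Ek.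
      + destruct (Hl_covered k e (l_Hl k e Ek)) as [h' Eh'].
        exists (Nat.max h h'); intros j e' Hj Ej.
        destruct (Nat.eq_dec j k) as [->|Hjk].
        * rewrite Ek in Ej; injection Ej as <-.
          apply (chain_hprefix _ _ (Nat.le_max_r h h')); exact Eh'.
        * apply (chain_hprefix _ _ (Nat.le_max_l h h')).
          apply IH; [lia|exact Ej].
      + exists h; intros j e' Hj Ej.
        destruct (Nat.eq_dec j k) as [->|Hjk]; [congruence|].
        apply IH; [lia|exact Ej]. }
  destruct (first_k (length l)) as [h Hh].
  exists h; intros j e Ej.
  apply Hh; [apply nth_error_Some; simpl in Ej; congruence|exact Ej].
Qed.

End IncreasingChain.

Lemma lu_opaque_hprefix (HP : hist -> Prop) (H H' : hist) :
  lu_opaque HP H -> hprefix H' H -> lu_opaque HP H'.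
Proof.
  intros H_op H'_H l l_H'.
  exact (H_op l (hprefix_trans _ _ _ l_H' H'_H)).
Qed.

Lemma lu_opaque_limit (HP : hist -> Prop) (Hs : nat -> list event) (Hl : hist) :
  (forall h, hprefix (HFin (Hs h)) (HFin (Hs (S h)))) ->
  (forall h, lu_opaque HP (HFin (Hs h))) ->
  is_limit Hs Hl -> lu_opaque HP Hl.
Proof.
  intros Hs_incr Hs_op Hlim l l_Hl.
  destruct (limit_finite_prefix Hs Hs_incr Hl l Hlim l_Hl) as [h l_Hs].
  exact (Hs_op h l l_Hs).
Qed.

Theorem mainTheorem5 (HP : hist -> Prop) :
  (* (a) prefix-closure *)
  (forall H H', HP H -> wf_hist H -> lu_opaque HP H -> hprefix H' H ->
     lu_opaque HP H') /\
  (* (b) limit-closure *)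
  (forall (Hs : nat -> list event) (Hl : hist),
     (forall h, HP (HFin (Hs h))) ->
     (forall h, wf_list (Hs h)) ->
     (forall h, lu_opaque HP (HFin (Hs h))) ->
     (forall h, hprefix (HFin (Hs h)) (HFin (Hs (S h)))) ->
     is_limit Hs Hl ->
     lu_opaque HP Hl).
Proof.
  split.
  - intros H H' _ _; apply lu_opaque_hprefix.
  - intros Hs Hl _ _ Hs_op Hs_incr; exact (lu_opaque_limit HP Hs Hl Hs_incr Hs_op).
Qed.
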